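(* For all probability measures $P,Q$, all $\alpha>0$ and all $\gamma\ge1$, writing $E:=E_\gamma(P\|Q)$: $$\mathscr{H}_\alpha(P\|Q)\ \ge\ \frac{1}{\alpha-1}\Bigl[\bigl(1+\tfrac{E}{\gamma}\bigr)^{1-\alpha} + \bigl(\tfrac{1-E}{\gamma}\bigr)^{1-\alpha} - 1 - \gamma^{\alpha-1}\Bigr]\quad(\alpha\ne1),$$ $$D(P\|Q)\ \ge\ -\ln\Bigl(\bigl(1+\tfrac{E}{\gamma}\bigr)(1-E)\Bigr)\quad(\text{in nats}),$$ and, for $\alpha\ne1$, $$D_\alpha(P\|Q)\ \ge\ \frac{1}{\alpha-1}\log\Bigl(\bigl(1+\tfrac{E}{\gamma}\bigr)^{1-\alpha}+\gamma^{\alpha-1}\bigl[(1-E)^{1-\alpha}-1\bigr]\Bigr),$$ while for $\alpha=1$, $D_1(P\|Q)=D(P\|Q)\ge -\log\bigl((1+\tfrac{E}{\gamma})(1-E)\bigr)$. (Expressions equal to $+\infty$ when $E=1$ and the corresponding power/logarithm diverges.)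
   Context: $\log$ is to an arbitrary fixed base, $\ln$ is the natural logarithm. For densities $p,q$ w.r.t. a dominating measure $\mu$: $E_\gamma(P\|Q):=\int(p-\gamma q)^+\,\mathrm{d}\mu$ for $\gamma\ge1$; the Hellinger divergence of order $\alpha\in(0,1)\cup(1,\infty)$ is $\mathscr{H}_\alpha(P\|Q):=D_{f_\alpha}(P\|Q)$ with $f_\alpha(t)=\frac{t^\alpha-1}{\alpha-1}$, where $D_f(P\|Q):=\int qf(p/q)\,\mathrm{d}\mu$ (standard conventions at $0$); $D(P\|Q)$ is the relative entropy $D_f$ with $f(t)=t\log t$; the Rényi divergence is $D_\alpha(P\|Q):=\frac{1}{\alpha-1}\log\bigl(1+(\alpha-1)\mathscr{H}_\alpha(P\|Q)\bigr)$ for $\alpha\neq1$, and $D_1:=D$. *)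

From HB Require Import structures.
From mathcomp Require Import all_boot all_order all_algebra.
From mathcomp Require Import all_classical all_reals all_analysis.

Set Implicit Arguments.
Unset Strict Implicit.
Unset Printing Implicit Defensive.

Import Order.TTheory GRing.Theory Num.Theory.
Import numFieldNormedType.Exports.

Local Open Scope classical_set_scope.
Local Open Scope ring_scope.

Section Divergences.
Context {R : realType} {d : measure_display} {T : measurableType d}.
Variable mu : {measure set T -> \bar R}.

Definition logb (b x : R) : R := ln x / ln b.

Definition elogb (b : R) (x : \bar R) : \bar R :=
  match x with
  | EFin r => if 0 < r then (logb b r)%:E else -oo%E
  | +oo%E => +oo%E
  | -oo%E => -oo%E
  end.

Definition epow (x s : R) : \bar R :=
  if 0 < x then (x `^ s)%:E
  else if 0 < s then 0%E else if s == 0 then 1%E else +oo%E.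

(** f'(oo) := lim_{t -> oo} f(t)/t, in the extended reals *)
Definition fstar (f : R -> R) : \bar R :=
  lim ((f t / t)%:E @[t --> +oo]).

(** integrand q f(p/q) with the standard conventions at 0:
    0 f(0/0) = 0, 0 f(a/0) = a f'(oo) for a > 0 *)
Definition fdiv_integrand (f : R -> R) (p q : T -> R) (x : T) : \bar R :=
  if 0 < q x then (q x * f (p x / q x))%:E
  else if 0 < p x then ((p x)%:E * fstar f)%E
  else 0%E.

(** f-divergence D_f(P||Q) for densities p, q w.r.t. mu *)
Definition fdiv (f : R -> R) (p q : T -> R) : \bar R :=
  (\int[mu]_x fdiv_integrand f p q x)%E.

Definition Egamma (gamma : R) (p q : T -> R) : R :=
  fine (\int[mu]_x (Num.max (p x - gamma * q x) 0)%:E)%E.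

Definition hellinger (alpha : R) (p q : T -> R) : \bar R :=
  fdiv (fun t => (t `^ alpha - 1) / (alpha - 1)) p q.

Definition KL (b : R) (p q : T -> R) : \bar R :=
  fdiv (fun t => t * logb b t) p q.

Definition renyi (b alpha : R) (p q : T -> R) : \bar R :=
  if alpha == 1 then KL b p q
  else (((alpha - 1)^-1)%:E * elogb b (1 + (alpha - 1)%:E * hellinger alpha p q))%E.

End Divergences.

(* Integrating [q f(p/q) >= k1 p + k2 q + k3 (p - gamma q)^+] shows that a hinge
   [k1 t + k2 + k3 (t - gamma)^+] below [f] on [0, oo), with [k1 + k3 <= f'(oo)], yields
   [D_f(P||Q) >= k1 + k2 + k3 E_gamma(P||Q)].  For [f(t) = (t^alpha - 1)/(alpha - 1)] and
   [f(t) = t ln t] such hinges are glued from a tangent of [f] at [s] and, after the rescaling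
   [f(t) = gamma^alpha f(t/gamma) + f(gamma)], a tangent at [r]; the choice
   [s = 1/(1 + E/gamma)], [r = 1/(1 - E)] gives the stated bounds, and [r -> oo] handles [E = 1].
   The Rényi bound follows by monotonicity of [x |-> log(1 + (alpha - 1) x) / (alpha - 1)]. *)

From HB Require Import structures.
From mathcomp Require Import all_boot all_order all_algebra.
From mathcomp Require Import all_classical all_reals all_analysis.
From mathcomp Require Import ring lra measurable_realfun.
Import Order.TTheory GRing.Theory Num.Theory.
Import numFieldNormedType.Exports.
Set Implicit Arguments.
Unset Strict Implicit.
Unset Printing Implicit Defensive.
Local Open Scope classical_set_scope.
Local Open Scope ring_scope.

Section real_bounds.
Context {R : realType}.
Implicit Types (a c d g m s t u v : R).

Lemma ln_le_subr1 u : 0 < u -> ln u <= u - 1.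
Proof.
move=> u0; have := @le_ln1Dx R (u - 1); rewrite addrCA subrr addr0; apply; lra.
Qed.

Lemma subr1_le_mul_ln u : 0 < u -> u - 1 <= u * ln u.
Proof.
move=> u0; have := @ln_le_subr1 u^-1; rewrite invr_gt0 lnV ?posrE // => /(_ u0) h.
have : u * (- ln u) <= u * (u^-1 - 1) by rewrite ler_pM2l.
rewrite mulrBr mulfV ?gt_eqF // mulr1; lra.
Qed.

Lemma bernoulli_powR_ge a v : 1 <= a -> 0 <= v -> 1 + a * (v - 1) <= v `^ a.
Proof.
move=> a1; rewrite le0r => /orP[/eqP->|v0].
  by rewrite powR0; [lra | apply/eqP => a0; lra].
rewrite -mulr_powRB1 ?(ltW v0) //; last lra.
have h1 : 1 + (a - 1) * ln v <= v `^ (a - 1).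
  by rewrite /powR gt_eqF // mulrC; exact: expR_ge1Dx.
have : v * (1 + (a - 1) * ln v) <= v * v `^ (a - 1) by rewrite ler_pM2l.
have : (a - 1) * (v - 1) <= (a - 1) * (v * ln v).
  by rewrite ler_wpM2l ?subr_ge0 // subr1_le_mul_ln.
nra.
Qed.

Lemma bernoulli_powR_le a v : 0 < a <= 1 -> 0 <= v -> v `^ a <= 1 + a * (v - 1).
Proof.
move=> /andP[a0 a1] v0.
have b1 : 1 <= a^-1 by rewrite invf_ge1.
have := bernoulli_powR_ge b1 (powR_ge0 v a).
rewrite -powRrM mulfV ?gt_eqF // powRr1 // => h.
have : a * (1 + a^-1 * (v `^ a - 1)) <= a * v by rewrite ler_pM2l.
rewrite mulrDr mulrA mulfV ?gt_eqF //; lra.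
Qed.

(* Trivial at [a = 1], where the division by zero yields [0]. *)
Lemma bernoulli_powR a v : 0 < a -> 0 <= v ->
  0 <= (v `^ a - 1 - a * (v - 1)) / (a - 1).
Proof.
move=> a0 v0; have [a1|a1|->] := ltgtP a 1; last by rewrite subrr invr0 mulr0.
- have := bernoulli_powR_le (andb_true_intro (conj a0 (ltW a1))) v0.
  by move=> h; rewrite ler_ndivlMr ?subr_lt0 // mul0r; lra.
- have := bernoulli_powR_ge (ltW a1) v0.
  by move=> h; rewrite divr_ge0 //; lra.
Qed.

Definition hellinger_fun a t := (t `^ a - 1) / (a - 1).

Definition hellinger_tangent a u t := (a * u `^ (a - 1) * t + (1 - a) * u `^ a - 1) / (a - 1).

Lemma hellinger_fun1 a : hellinger_fun a 1 = 0.
Proof. by rewrite /hellinger_fun powR1 subrr mul0r. Qed.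

Lemma hellinger_tangent_le a u t : 0 < a -> a != 1 -> 0 < u -> 0 <= t ->
  hellinger_tangent a u t <= hellinger_fun a t.
Proof.
move=> a0 a1 u0 t0; set v := t / u.
have -> : t = u * v by rewrite /v mulrC divfK ?gt_eqF.
have ua : u `^ (a - 1) = u `^ a / u.
  by rewrite powRB ?powRr1 ?(ltW u0) // (gt_eqF u0) implybT.
rewrite -subr_ge0 (_ : _ - _ = u `^ a * ((v `^ a - 1 - a * (v - 1)) / (a - 1))).
  by rewrite mulr_ge0 ?powR_ge0 // bernoulli_powR // (divr_ge0 t0 (ltW u0)).
rewrite /hellinger_fun /hellinger_tangent powRM ?(ltW u0) ?(divr_ge0 t0 (ltW u0)) // ua.
by field; rewrite subr_eq0 a1 gt_eqF.
Qed.

Lemma hellinger_fun_scale a g t : 0 < g -> 0 <= t ->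
  hellinger_fun a t = g `^ a * hellinger_fun a (t / g) + hellinger_fun a g.
Proof.
move=> g0 t0; rewrite /hellinger_fun mulrA -mulrDl.
rewrite {1}(_ : t = g * (t / g)); last by rewrite mulrC divfK ?gt_eqF.
by rewrite powRM ?(ltW g0) ?(divr_ge0 t0 (ltW g0)) //; congr (_ * _); ring.
Qed.

Lemma powR_inv_tangent a m : 0 < m ->
  a * (m^-1) `^ (a - 1) + (1 - a) * (m^-1) `^ a * m = m `^ (1 - a).
Proof.
move=> m0; have mi0 : 0 < m^-1 by rewrite invr_gt0.
have -> : (m^-1) `^ a = (m^-1) `^ (a - 1) * m^-1.
  rewrite {1}(_ : a = a - 1 + 1); last by ring.
  by rewrite powRD ?powRr1 ?(ltW mi0) // (gt_eqF mi0) implybT.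
rewrite -mulrA divfK ?gt_eqF // -powR_inv1 ?ltW // -powRrM.
rewrite (_ : -1 * (a - 1) = 1 - a); ring.
Qed.

Lemma kl_tangent_le u t : 0 < u -> 0 <= t -> (ln u + 1) * t - u <= t * ln t.
Proof.
move=> u0; rewrite le0r => /orP[/eqP->|t0]; first by rewrite !mul0r mulr0 sub0r oppr_le0 ltW.
have := ln_le_subr1 (divr_gt0 u0 t0); rewrite ln_div ?posrE // => h.
have := ler_wpM2l (ltW t0) h.
rewrite mulrBr mulrBr mulrCA divff ?gt_eqF // mulr1 mulr1; lra.
Qed.

Lemma hinge_le (f : R -> R) c1 d1 c2 g t :
  (forall t, 0 <= t -> c1 * t + d1 <= f t) ->
  (forall t, 0 <= t -> c2 * (t - g) + (c1 * g + d1) <= f t) ->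
  0 <= t -> c1 * t + d1 + (c2 - c1) * Num.max (t - g) 0 <= f t.
Proof.
move=> f1 f2 t0; have [tg|gt] := leP t g.
  by rewrite (_ : Num.max _ _ = 0) ?mulr0 ?addr0 ?f1 //; apply/max_idPr; lra.
rewrite (_ : Num.max _ _ = t - g); last by apply/max_idPl; lra.
by rewrite (_ : _ + _ = c2 * (t - g) + (c1 * g + d1)) ?f2 //; ring.
Qed.

Section hellinger_hinge.
Variables (a g s r : R).
Hypotheses (a0 : 0 < a) (a1 : a != 1) (g0 : 0 < g) (s0 : 0 < s) (r0 : 0 < r).

(* The line [c1 t + d1] is the tangent at [s] plus [g ^ (a - 1) t] times the nonpositive
   value at [1] of the tangent at [r]; the line [c2 (t - g) + c1 g + d1] is the tangent at
   [r] transported by [hellinger_fun_scale], plus a nonpositive multiple of [t]. *)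
Definition hellinger_c1 :=
  (a * s `^ (a - 1) + g `^ (a - 1) * (a * r `^ (a - 1) + (1 - a) * r `^ a - 1)) / (a - 1).
Definition hellinger_d1 := ((1 - a) * s `^ a - 1) / (a - 1).
Definition hellinger_c2 :=
  (a * s `^ (a - 1) + (1 - a) * s `^ a / g + g `^ (a - 1) * (a * r `^ (a - 1) - 1)) / (a - 1).

Let a1' : a - 1 != 0. Proof. by rewrite subr_eq0. Qed.

Lemma hellinger_line1_le t : 0 <= t -> hellinger_c1 * t + hellinger_d1 <= hellinger_fun a t.
Proof.
move=> t0.
have -> : hellinger_c1 * t + hellinger_d1 =
    hellinger_tangent a s t + g `^ (a - 1) * t * hellinger_tangent a r 1.
  by rewrite /hellinger_c1 /hellinger_d1 /hellinger_tangent; field.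
have tan_r : hellinger_tangent a r 1 <= 0 by rewrite -(hellinger_fun1 a) hellinger_tangent_le.
have := hellinger_tangent_le a0 a1 s0 t0.
have : g `^ (a - 1) * t * hellinger_tangent a r 1 <= 0.
  by rewrite mulr_ge0_le0 ?mulr_ge0 ?powR_ge0.
lra.
Qed.

Lemma hellinger_line2_le t : 0 <= t ->
  hellinger_c2 * (t - g) + (hellinger_c1 * g + hellinger_d1) <= hellinger_fun a t.
Proof.
move=> t0; have tg0 : 0 <= t / g by rewrite divr_ge0 // ltW.
have -> : hellinger_c2 * (t - g) + (hellinger_c1 * g + hellinger_d1) =
    t / g * (hellinger_tangent a s g - hellinger_fun a g)
    + g `^ a * hellinger_tangent a r (t / g) + hellinger_fun a g.
  rewrite /hellinger_c1 /hellinger_c2 /hellinger_d1 /hellinger_tangent /hellinger_fun.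
  rewrite -(mulr_powRB1 (ltW g0) a0); field; by rewrite a1' gt_eqF.
rewrite [leRHS](hellinger_fun_scale a g0 t0).
have := ler_wpM2l (powR_ge0 g a) (hellinger_tangent_le a0 a1 r0 tg0).
have : t / g * (hellinger_tangent a s g - hellinger_fun a g) <= 0.
  by rewrite mulr_ge0_le0 // subr_le0 hellinger_tangent_le // ltW.
lra.
Qed.

End hellinger_hinge.

Section kl_hinge.
Variables (g s r : R).
Hypotheses (g0 : 0 < g) (s0 : 0 < s) (r0 : 0 < r).

Definition kl_c1 := ln s + ln r + 2 - r.
Definition kl_c2 := ln s + ln r + 2 - s / g.

Lemma kl_line1_le t : 0 <= t -> kl_c1 * t - s <= t * ln t.
Proof.
move=> t0; have := kl_tangent_le s0 t0.
have : t * (ln r - (r - 1)) <= 0 by rewrite mulr_ge0_le0 // subr_le0 ln_le_subr1.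
rewrite /kl_c1; lra.
Qed.

Lemma kl_line2_le t : 0 <= t -> kl_c2 * (t - g) + (kl_c1 * g - s) <= t * ln t.
Proof.
move=> t0; have tg0 : 0 <= t / g by rewrite divr_ge0 // ltW.
have -> : kl_c2 * (t - g) + (kl_c1 * g - s) =
    t / g * ((ln s + 1) * g - s - g * ln g) + g * ((ln r + 1) * (t / g) - r) + t * ln g.
  by rewrite /kl_c1 /kl_c2; field; rewrite gt_eqF.
have -> : t * ln t = g * (t / g * ln (t / g)) + t * ln g.
  have [->|tn0] := eqVneq t 0; first by rewrite !mul0r mulr0 add0r.
  have tp : 0 < t by rewrite lt_neqAle eq_sym tn0.
  by rewrite ln_div ?posrE //; field; rewrite gt_eqF.
have := ler_wpM2l (ltW g0) (kl_tangent_le r0 tg0).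
have : t / g * ((ln s + 1) * g - s - g * ln g) <= 0.
  by rewrite mulr_ge0_le0 // subr_le0 kl_tangent_le // ltW.
lra.
Qed.

End kl_hinge.

Lemma fstar_ge_slope (f : R -> R) c d :
  (forall t, 0 <= t -> c * t + d <= f t) -> cvg ((f t / t)%:E @[t --> +oo]) ->
  (c%:E <= fstar f)%E.
Proof.
move=> fge fcvg; rewrite /fstar.
have cd : (c + d / t)%:E @[t --> +oo] --> c%:E.
  apply: cvg_EFin; first exact: nearW.
  rewrite -[X in _ --> X]addr0; apply: cvgD; first exact: cvg_cst.
  rewrite -(mulr0 d); apply: cvgM; first exact: cvg_cst.
  apply/(@cvgrVy _ _ _ _ (fun t : R => t^-1)).
  - by near=> t; rewrite invr_gt0; near: t; exact: nbhs_pinfty_gt.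
  - set h := (X in X x @[x --> _] --> _).
    by have -> : h = id by apply/funext => x; rewrite /h /= invrK.
apply: (lee_cvg_to cd fcvg); near=> t.
have t0 : 0 < t by near: t; exact: nbhs_pinfty_gt.
rewrite lee_fin ler_pdivlMr // mulrDl divfK ?gt_eqF // fge // ltW.
Unshelve. all: end_near. Qed.

Lemma hellinger_fun_slope_gt1 a : 1 < a ->
  (hellinger_fun a t / t)%:E @[t --> +oo] --> +oo%E.
Proof.
move=> a1; apply/cvgeyPge => A.
exists (Num.max 1 (expR A)); split; first by rewrite num_real.
move=> t /=; rewrite gt_max => /andP[t1 tA].
have t0 : 0 < t by lra.
have lnA : A < ln t by rewrite -(@ltr_expR R) lnK // posrE.
have lt0 : 0 <= ln t by apply: ln_ge0; lra.
have pow_ge : 1 + (a - 1) * ln t <= t `^ (a - 1).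
  by rewrite /powR gt_eqF // mulrC; exact: expR_ge1Dx.
have powE : t `^ a = t * t `^ (a - 1) by rewrite mulr_powRB1 ?(ltW t0) //; lra.
have tpow_ge : t * (1 + (a - 1) * ln t) <= t * t `^ (a - 1) by rewrite ler_pM2l.
rewrite lee_fin /hellinger_fun ler_pdivlMr // ler_pdivlMr; last lra.
have : A * t <= ln t * t by rewrite ler_pM2r //; lra.
have : 0 <= (a - 1) * (ln t * t) by rewrite mulr_ge0 ?mulr_ge0 //; lra.
nra.
Qed.

(* [|f t / t| <= t ^ (a - 1) / (1 - a) <= 1 / ((1 - a)^2 ln t)], whence the threshold [K]. *)
Lemma hellinger_fun_slope_lt1 a : 0 < a < 1 ->
  (hellinger_fun a t / t)%:E @[t --> +oo] --> 0%:E.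
Proof.
move=> /andP[a0 a1]; apply: cvg_EFin; first exact: nearW.
apply/cvgrPdist_lt => e e0.
set c := 1 - a; have c0 : 0 < c by rewrite /c; lra.
set K := (c * c * e)^-1.
have K0 : 0 < K by rewrite /K invr_gt0 !mulr_gt0.
exists (Num.max 1 (expR K)); split; first by rewrite num_real.
move=> t /=; rewrite gt_max => /andP[t1 tK].
have t0 : 0 < t by lra.
have K_lt : K < ln t by rewrite -(@ltr_expR R) lnK // posrE.
have ta1 : 1 <= t `^ a.
  have := @ge0_ler_powR R a (ltW a0) 1 t; rewrite powR1; apply; rewrite ?nnegrE; lra.
have slope_exp : t `^ a / t = (expR (c * ln t))^-1.
  rewrite /powR gt_eqF // {2}(_ : t = expR (ln t)); last by rewrite lnK // posrE.
  by rewrite -expRB -expRN; congr expR; rewrite /c; ring.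
have exp_gt : (c * e)^-1 < expR (c * ln t).
  apply: (lt_le_trans _ (expR_ge1Dx _)); rewrite -(ltr_pM2l c0) in K_lt.
  suff : c * K = (c * e)^-1 by lra.
  by rewrite /K !invfM !mulrA mulfV ?gt_eqF // mul1r.
rewrite sub0r normrN /hellinger_fun.
have -> : (t `^ a - 1) / (a - 1) / t = - ((t `^ a - 1) / t / c).
  by rewrite /c; field; apply/and3P; split; apply/negP => /eqP h; lra.
rewrite normrN ger0_norm; last by rewrite !divr_ge0 ?subr_ge0 // ltW.
rewrite ltr_pdivrMr //; apply: (@le_lt_trans _ _ (t `^ a / t)).
  by rewrite ler_pM2r ?invr_gt0 //; lra.
rewrite slope_exp [e * c]mulrC -(invrK (c * e)) ltf_pV2 ?posrE ?expR_gt0 //.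
by rewrite invr_gt0 mulr_gt0.
Qed.

Lemma hellinger_fun_slope_cvg a : 0 < a -> a != 1 ->
  cvg ((hellinger_fun a t / t)%:E @[t --> +oo]).
Proof.
move=> a0 a1; have [a_lt1|a_gt1|a_eq1] := ltgtP a 1; last by rewrite a_eq1 eqxx in a1.
  by apply: cvgP (hellinger_fun_slope_lt1 _); rewrite a0.
exact: cvgP (hellinger_fun_slope_gt1 a_gt1).
Qed.

Lemma kl_slope_cvg b : 0 < ln b -> cvg (((t : R) * logb b t / t)%:E @[t --> +oo%R]).
Proof.
move=> b0; suff : ((t : R) * logb b t / t)%:E @[t --> +oo%R] --> +oo%E by exact: cvgP.
apply/cvgeyPge => A.
exists (expR (A * ln b)); split; first by rewrite num_real.
move=> t /= tA.
have t0 : 0 < t by rewrite (lt_trans _ tA) // expR_gt0.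
have lnA : A * ln b < ln t by rewrite -(@ltr_expR R) lnK // posrE.
rewrite lee_fin mulrC mulrA mulVf ?gt_eqF // mul1r /logb ler_pdivlMr //; lra.
Qed.

Lemma exists_powR_small c K e : 0 < c -> 0 <= K -> 0 < e ->
  exists2 r, 0 < r & K * r `^ (- c) <= e.
Proof.
move=> c0 K0 e0; set y := K / (c * e).
exists (expR y); first exact: expR_gt0.
rewrite -expRM (_ : y * - c = - (K / e)); last by rewrite /y; field; rewrite !gt_eqF.
rewrite expRN -[K * _]/(K / expR (K / e)) ler_pdivrMr ?expR_gt0 //.
apply: (le_trans _ (ler_wpM2l (ltW e0) (expR_ge1Dx (K / e)))).
by rewrite mulrDr mulr1 mulrCA divff ?gt_eqF // mulr1; lra.
Qed.

Lemma exists_powR_large c K M : 0 < c -> 0 < K ->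
  exists2 r, 0 < r & M <= K * r `^ c.
Proof.
move=> c0 K0; set y := `|M| / (K * c).
exists (expR y); first exact: expR_gt0.
rewrite -expRM (_ : y * c = `|M| / K); last by rewrite /y; field; rewrite !gt_eqF.
apply: (le_trans _ (ler_wpM2l (ltW K0) (expR_ge1Dx (`|M| / K)))).
rewrite mulrDr mulr1 mulrCA divff ?gt_eqF // mulr1.
by have := ler_norm M; lra.
Qed.

End real_bounds.

Section extended_reals.
Context {R : realType}.
Local Open Scope ereal_scope.

Lemma epowE (x c : R) : (0 <= x)%R -> (0 < x \/ 0 < c)%R -> epow x c = (x `^ c)%:E.
Proof.
move=> x0 h; rewrite /epow; case: ifPn => // xp.
case: h => [hx|c0]; first by rewrite hx in xp.
have -> : x = 0%R by apply/eqP; rewrite eq_le x0 andbT leNgt.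
by rewrite c0 powR0 ?gt_eqF.
Qed.

Lemma elogb_le (b : R) (x y : \bar R) : (0 < ln b)%R -> x <= y -> elogb b x <= elogb b y.
Proof.
move=> b0; case: x => [x| |]; case: y => [y| |] //=; rewrite ?leey ?leNye //.
rewrite lee_fin => xy; case: ifPn => x0; last by rewrite leNye.
have y0 := lt_le_trans x0 xy.
by rewrite y0 lee_fin /logb ler_pM2r ?invr_gt0 // ler_ln.
Qed.

Lemma elogb_EFin (b x : R) : (0 < x)%R -> elogb b x%:E = (logb b x)%:E.
Proof. by move=> x0; rewrite /= x0. Qed.

(* The sign of [a - 1] flips both the bound on [H] and the outer factor. *)
Lemma renyi_ge_of_hellinger (b a X : R) (H : \bar R) : (0 < ln b)%R -> a != 1%R ->
  ((X - 1) / (a - 1))%:E <= H ->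
  ((a - 1)^-1)%:E * elogb b X%:E <= ((a - 1)^-1)%:E * elogb b (1 + (a - 1)%:E * H).
Proof.
move=> b0 a1 XH; case: H XH => [h| |] XH; last by rewrite leeNy_eq in XH.
- rewrite lee_fin in XH; rewrite -EFinM -EFinD.
  have [a_lt1|a_gt1|a_eq1] := ltgtP a 1%R; last by rewrite a_eq1 eqxx in a1.
  + have an : (a - 1 < 0)%R by rewrite subr_lt0.
    rewrite leNgt lte_nmul2l ?lte_fin ?invr_lt0 // -leNgt; apply: elogb_le => //.
    rewrite lee_fin; have := ler_wnM2l (ltW an) XH.
    by rewrite mulrCA divff ?lt_eqF // mulr1; lra.
  + have ap : (0 < a - 1)%R by rewrite subr_gt0.
    apply: lee_wpmul2l; first by rewrite lee_fin invr_ge0 ltW.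
    apply: elogb_le => //; rewrite lee_fin.
    by have := ler_wpM2l (ltW ap) XH; rewrite mulrCA divff ?gt_eqF // mulr1; lra.
- have [a_lt1|a_gt1|a_eq1] := ltgtP a 1%R; last by rewrite a_eq1 eqxx in a1.
  + rewrite lt0_muley ?lte_fin ?subr_lt0 // addeNy /=.
    by rewrite leNgt lte_nmul2l ?lte_fin ?invr_lt0 ?subr_lt0 // -leNgt leNye.
  + rewrite gt0_muley ?lte_fin ?subr_gt0 // addey //=.
    by rewrite gt0_muley ?lte_fin ?invr_gt0 ?subr_gt0 // leey.
Qed.

End extended_reals.

Section Egamma_lower_bounds.
Local Open Scope ereal_scope.
Context {R : realType} {d : measure_display} {T : measurableType d}.
Variables (mu : {measure set T -> \bar R}) (p q : T -> R) (g : R).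
Hypotheses (mp : measurable_fun setT p) (mq : measurable_fun setT q).
Hypotheses (p0 : forall x, (0 <= p x)%R) (q0 : forall x, (0 <= q x)%R).
Hypotheses (ip : \int[mu]_x (p x)%:E = 1) (iq : \int[mu]_x (q x)%:E = 1).
Hypothesis g1 : (1 <= g)%R.

Let g0 : (0 < g)%R. Proof. exact: lt_le_trans g1. Qed.

Let excess x := Num.max (p x - g * q x)%R 0%R.

Let density_integrable (u : T -> R) : measurable_fun setT u -> (forall x, 0 <= u x)%R ->
  \int[mu]_x (u x)%:E = 1 -> mu.-integrable setT (EFin \o u).
Proof.
move=> mu0 u0 iu; apply/integrableP; split; first exact/measurable_EFinP.
by under eq_integral do rewrite gee0_abs ?lee_fin //; rewrite iu ltry.
Qed.

Let p_int := density_integrable mp p0 ip.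
Let q_int := density_integrable mq q0 iq.

Let excess_ge0 x : (0 <= excess x)%R. Proof. by rewrite /excess le_max lexx orbT. Qed.

Let excess_le x : (excess x <= p x)%R.
Proof. by rewrite /excess ge_max p0 andbT gerBl mulr_ge0 // ltW. Qed.

Let measurable_excess : measurable_fun setT excess.
Proof.
by apply: measurable_maxr => //; apply: measurable_funB => //; exact: measurable_funM.
Qed.

Let excess_int : mu.-integrable setT (EFin \o excess).
Proof.
apply: le_integrable p_int => //; first exact/measurable_EFinP.
by move=> x _; rewrite /= lee_fin !ger0_norm ?excess_le ?excess_ge0 ?p0.
Qed.

Let excess_integral_le1 : \int[mu]_x (excess x)%:E <= 1.
Proof.
rewrite -ip; apply: ge0_le_integral => //; try exact/measurable_EFinP.
- by move=> x _; rewrite lee_fin excess_ge0.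
- by move=> x _; rewrite lee_fin excess_le.
Qed.

Lemma Egamma_integral : (Egamma mu g p q)%:E = \int[mu]_x (excess x)%:E.
Proof.
rewrite /Egamma fineK // ge0_fin_numE.
  by apply: le_lt_trans excess_integral_le1 _; rewrite ltry.
by apply: integral_ge0 => x _; rewrite lee_fin excess_ge0.
Qed.

Lemma Egamma_ge0_le1 : (0 <= Egamma mu g p q <= 1)%R.
Proof.
rewrite -lee_fin -[(_ <= 1)%R]lee_fin Egamma_integral excess_integral_le1 andbT.
by apply: integral_ge0 => x _; rewrite lee_fin excess_ge0.
Qed.

Let measurable_invq : measurable_fun setT (fun x => (q x)^-1)%R.
Proof.
rewrite (_ : (fun x => _) = fun x => q x `^ (-1))%R; last first.
  by apply/funext => x; rewrite powR_inv1.
exact: measurableT_comp (measurable_powR _) mq.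
Qed.

Lemma measurable_fdiv_integrand (f : R -> R) : measurable_fun setT f ->
  measurable_fun setT (fdiv_integrand f p q).
Proof.
move=> mf; apply: measurable_fun_ifT; first exact: measurable_fun_ltr.
  apply/measurable_EFinP; apply: measurable_funM => //.
  by apply: measurableT_comp mf _; exact: measurable_funM.
apply: measurable_fun_ifT; first exact: measurable_fun_ltr.
  by apply: emeasurable_funM => //; exact/measurable_EFinP.
exact: measurable_cst.
Qed.

(* Where q vanishes the integrand is p f'(oo), which dominates the hinge because its
   two slopes add up to at most f'(oo). *)
Lemma fdiv_integrand_ge_hinge (f : R -> R) (k1 k2 k3 : R) x :
  (forall t, 0 <= t -> k1 * t + k2 + k3 * Num.max (t - g) 0 <= f t)%R ->
  (k1 + k3)%:E <= fstar f ->
  (k1 * p x + k2 * q x + k3 * excess x)%:E <= fdiv_integrand f p q x.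
Proof.
move=> hinge slope; rewrite /fdiv_integrand; case: ifPn => [qx|].
  have := ler_wpM2l (q0 x) (hinge _ (divr_ge0 (p0 x) (q0 x))).
  rewrite lee_fin; apply: le_trans; rewrite le_eqVlt; apply/orP; left; apply/eqP.
  have -> : excess x = (q x * Num.max (p x / q x - g) 0)%R.
    rewrite maxr_pMr ?q0 // mulr0 mulrBr mulrCA mulfV ?gt_eqF // mulr1.
    by rewrite [(q x * g)%R]mulrC.
  by field; rewrite gt_eqF.
move=> qx; have qx0 : q x = 0%R by apply/eqP; rewrite eq_le q0 andbT leNgt.
rewrite /excess qx0 !mulr0 addr0 subr0; case: ifPn => [px|].
  rewrite (_ : Num.max (p x) 0%R = p x); last exact/max_idPl/p0.
  by rewrite -mulrDl mulrC EFinM; apply: lee_wpmul2l; rewrite ?lee_fin ?p0.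
move=> px; have -> : p x = 0%R by apply/eqP; rewrite eq_le p0 andbT leNgt.
by rewrite mulr0 maxxx mulr0 addr0.
Qed.

Lemma fdiv_ge_Egamma_hinge (f : R -> R) (k1 k2 k3 : R) : measurable_fun setT f ->
  (forall t, 0 <= t -> k1 * t + k2 + k3 * Num.max (t - g) 0 <= f t)%R ->
  (k1 + k3)%:E <= fstar f ->
  (k1 + k2 + k3 * Egamma mu g p q)%:E <= fdiv mu f p q.
Proof.
move=> mf hinge slope.
pose G x := (k1 * p x + k2 * q x + k3 * excess x)%:E.
have G_int : mu.-integrable setT G.
  rewrite /G; under eq_fun do rewrite !EFinD !EFinM.
  by apply: integrableD => //; [apply: integrableD => // |]; exact: integrableZl.
have -> : (k1 + k2 + k3 * Egamma mu g p q)%:E = \int[mu]_x G x.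
  rewrite /G; under eq_integral do rewrite !EFinD !EFinM.
  rewrite integralD //; [|by apply: integrableD => //; exact: integrableZl|exact: integrableZl].
  rewrite integralD //; try exact: integrableZl.
  by rewrite !integralZl // ip iq -Egamma_integral !mule1 -!EFinM -!EFinD.
have GF x : G x <= fdiv_integrand f p q x by exact: fdiv_integrand_ge_hinge.
have mF := measurable_fdiv_integrand mf.
have mG : measurable_fun setT G by exact: measurable_int G_int.
rewrite /fdiv integralE [leRHS]integralE; apply: leeB; apply: ge0_le_integral => //.
- exact: measurable_funepos.
- exact: measurable_funepos.
- by move=> x _; apply: (@funepos_le _ _ setT); rewrite ?in_setT // => y _; exact: GF.
- exact: measurable_funeneg.
- exact: measurable_funeneg.
- by move=> x _; apply: (@funeneg_le _ _ setT); rewrite ?in_setT // => y _; exact: GF.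
Qed.

Lemma fdiv_ge_Egamma (f : R -> R) (c1 d1 c2 : R) : measurable_fun setT f ->
  (forall t, 0 <= t -> c1 * t + d1 <= f t)%R ->
  (forall t, 0 <= t -> c2 * (t - g) + (c1 * g + d1) <= f t)%R ->
  cvg ((f t / t)%:E @[t --> +oo%R]) ->
  (c1 + d1 + (c2 - c1) * Egamma mu g p q)%:E <= fdiv mu f p q.
Proof.
move=> mf line1 line2 slope; apply: fdiv_ge_Egamma_hinge => //.
  by move=> t t0; exact: hinge_le.
rewrite addrC subrK; apply: (@fstar_ge_slope _ _ _ (c1 * g + d1 - c2 * g)) => // t t0.
by rewrite (_ : _ + _ = c2 * (t - g) + (c1 * g + d1))%R ?line2 //; ring.
Qed.

Let E := Egamma mu g p q.

Let E_lt1_or_eq1 : (E < 1 \/ E = 1)%R.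
Proof.
rewrite /E; case/andP: Egamma_ge0_le1 => _.
by rewrite le_eqVlt => /orP[/eqP->|->]; [right|left].
Qed.

Let m_gt0 : (0 < 1 + E / g)%R.
Proof.
case/andP: Egamma_ge0_le1 => E0 _.
by rewrite (lt_le_trans ltr01) // lerDl divr_ge0 // ltW.
Qed.

Lemma hellinger_ge_tangents a s r : (0 < a)%R -> a != 1%R -> (0 < s)%R -> (0 < r)%R ->
  ((a * s `^ (a - 1) + (1 - a) * s `^ a * (1 + E / g)
     + g `^ (a - 1) * (a * r `^ (a - 1) + (1 - a) * r `^ a * (1 - E) - 1) - 1) / (a - 1))%:E
  <= hellinger mu a p q.
Proof.
move=> a0 a1 s0 r0.
rewrite [X in X%:E <= _](_ : _ = hellinger_c1 a g s r + hellinger_d1 a s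
    + (hellinger_c2 a g s r - hellinger_c1 a g s r) * E)%R; last first.
  by rewrite /hellinger_c1 /hellinger_d1 /hellinger_c2; field; rewrite subr_eq0 a1 gt_eqF.
apply: fdiv_ge_Egamma.
- by apply: measurable_funM => //; apply: measurable_funB => //; exact: measurable_powR.
- by move=> t t0; apply: hellinger_line1_le.
- by move=> t t0; apply: hellinger_line2_le.
- exact: hellinger_fun_slope_cvg.
Qed.

Lemma hellinger_ge_real a : (0 < a)%R -> a != 1%R -> (E < 1 \/ a < 1)%R ->
  (((1 + E / g) `^ (1 - a) + g `^ (a - 1) * ((1 - E) `^ (1 - a) - 1) - 1) / (a - 1))%:E
  <= hellinger mu a p q.
Proof.
move=> a0 a1 E_or_a; have mi : (0 < (1 + E / g)^-1)%R by rewrite invr_gt0.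
case: E_lt1_or_eq1 => [E_lt1|E_eq1].
  have ni : (0 < (1 - E)^-1)%R by rewrite invr_gt0 subr_gt0.
  by have := hellinger_ge_tangents a0 a1 mi ni; rewrite !powR_inv_tangent // subr_gt0.
have a_lt1 : (a < 1)%R by case: E_or_a; rewrite // E_eq1 ltxx.
have c0 : (0 < 1 - a)%R by rewrite subr_gt0.
set G := (g `^ (a - 1))%R.
have K0 : (0 <= G * a / (1 - a))%R by rewrite divr_ge0 ?mulr_ge0 ?powR_ge0 // ltW.
apply/lee_addgt0Pr => e e0.
have [r r0] := exists_powR_small c0 K0 e0; rewrite opprB => small.
have := hellinger_ge_tangents a0 a1 mi r0.
rewrite powR_inv_tangent // E_eq1 subrr powR0 ?subr_eq0 1?eq_sym // mulr0 addr0 => bound.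
apply: le_trans (leeD2r _ bound); rewrite -EFinD lee_fin.
set V := (X in (_ <= X + _)%R).
have -> : V = ((((1 + 1 / g) `^ (1 - a) + G * (0 - 1) - 1) / (a - 1))
              - G * a / (1 - a) * r `^ (a - 1))%R.
  by rewrite /V /G; field; rewrite !subr_eq0 a1 eq_sym (lt_eqF a_lt1).
lra.
Qed.

Lemma hellinger_eq_pinfty a : (1 < a)%R -> E = 1%R -> hellinger mu a p q = +oo.
Proof.
move=> a_gt1 E_eq1.
have a0 : (0 < a)%R by apply: lt_trans a_gt1.
have mi : (0 < (1 + E / g)^-1)%R by rewrite invr_gt0.
have c0 : (0 < a - 1)%R by rewrite subr_gt0.
set G := (g `^ (a - 1))%R.
have K0 : (0 < G * a)%R by rewrite mulr_gt0 ?powR_gt0.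
apply: eq_infty => M.
have [r r0 large] := exists_powR_large (M * (a - 1) + G + 1)%R c0 K0.
have := hellinger_ge_tangents a0 (negbT (gt_eqF a_gt1)) mi r0.
rewrite powR_inv_tangent // E_eq1 subrr mulr0 addr0 => bound.
apply: le_trans bound; rewrite lee_fin ler_pdivlMr //.
have : (0 <= (1 + 1 / g) `^ (1 - a))%R by apply: powR_ge0.
rewrite -/G; nra.
Qed.

Lemma KL_ge_tangents c s r : (0 < ln c)%R -> (0 < s)%R -> (0 < r)%R ->
  ((ln s + 1 - s * (1 + E / g) + ln r + 1 - r * (1 - E)) / ln c)%:E <= KL mu c p q.
Proof.
move=> c0 s0 r0.
rewrite [X in X%:E <= _](_ : _ = kl_c1 s r / ln c + - s / ln c
    + (kl_c2 g s r / ln c - kl_c1 s r / ln c) * E)%R; last first.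
  by rewrite /kl_c1 /kl_c2; field; rewrite !gt_eqF.
apply: fdiv_ge_Egamma.
- by apply: measurable_funM => //; apply: measurable_funM => //; exact: measurable_ln.
- move=> t t0; rewrite /logb mulrA.
  rewrite (_ : _ + _ = (kl_c1 s r * t - s) / ln c)%R; last by field; rewrite gt_eqF.
  by rewrite ler_pM2r ?invr_gt0 // kl_line1_le.
- move=> t t0; rewrite /logb mulrA.
  rewrite (_ : _ + _ = (kl_c2 g s r * (t - g) + (kl_c1 s r * g - s)) / ln c)%R.
    by rewrite ler_pM2r ?invr_gt0 // kl_line2_le.
  by field; rewrite gt_eqF.
- exact: kl_slope_cvg.
Qed.

Lemma KL_ge_real c : (0 < ln c)%R -> (E < 1)%R ->
  ((- (ln (1 + E / g) + ln (1 - E))) / ln c)%:E <= KL mu c p q.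
Proof.
move=> c0 E_lt1; have n0 : (0 < 1 - E)%R by rewrite subr_gt0.
have := KL_ge_tangents c0 (_ : 0 < (1 + E / g)^-1)%R (_ : 0 < (1 - E)^-1)%R.
rewrite !invr_gt0 !lnV ?posrE // !mulVf ?gt_eqF // => /(_ m_gt0 n0).
by rewrite (_ : (- ln (1 + E / g) + 1 - 1 + - ln (1 - E) + 1 - 1 =
                 - (ln (1 + E / g) + ln (1 - E)))%R) //; ring.
Qed.

Lemma KL_eq_pinfty c : (0 < ln c)%R -> E = 1%R -> KL mu c p q = +oo.
Proof.
move=> c0 E_eq1; have mi : (0 < (1 + E / g)^-1)%R by rewrite invr_gt0.
apply: eq_infty => M.
have := KL_ge_tangents c0 mi (expR_gt0 (M * ln c + ln (1 + E / g))).
rewrite expRK lnV ?posrE // mulVf ?gt_eqF // E_eq1 subrr mulr0 => bound.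
apply: le_trans bound; rewrite lee_fin ler_pdivlMr // -E_eq1; lra.
Qed.

Let Egamma_cases (a : R) : a != 1%R -> (E = 1 /\ 1 < a \/ (E < 1 \/ a < 1))%R.
Proof.
move=> a1; case: E_lt1_or_eq1 => [E_lt1|E_eq1]; first by right; left.
have [a_lt1|a_gt1|a_eq1] := ltgtP a 1%R; first by right; right.
  by left.
by rewrite a_eq1 eqxx in a1.
Qed.

Let n_ge0 : (0 <= 1 - E)%R.
Proof. by case/andP: Egamma_ge0_le1 => _; rewrite subr_ge0. Qed.

Lemma hellinger_ge_Egamma a : (0 < a)%R -> a != 1%R ->
  ((a - 1)^-1)%:E * (epow (1 + E / g) (1 - a) + epow ((1 - E) / g) (1 - a)
    - 1%E - (g `^ (a - 1))%:E) <= hellinger mu a p q.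
Proof.
move=> a0 a1; case: (Egamma_cases a1) => [[E_eq1 a_gt1]|E_or_a].
  by rewrite hellinger_eq_pinfty // leey.
rewrite (epowE (ltW m_gt0) (or_introl m_gt0)) epowE ?divr_ge0 ?(ltW g0) //; last first.
  by case: E_or_a => ?; [left; rewrite divr_gt0 // subr_gt0 | right; rewrite subr_gt0].
rewrite -!EFinD -EFinM; apply: le_trans (hellinger_ge_real a0 a1 E_or_a).
rewrite lee_fin le_eqVlt; apply/orP; left; apply/eqP.
rewrite powRM ?invr_ge0 ?(ltW g0) // -powR_inv1 ?(ltW g0) // -powRrM.
rewrite (_ : -1 * (1 - a) = a - 1)%R; last by ring.
by field; rewrite subr_eq0.
Qed.

Lemma renyi_ge_Egamma b a : (0 < ln b)%R -> (0 < a)%R -> a != 1%R ->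
  ((a - 1)^-1)%:E * elogb b (epow (1 + E / g) (1 - a)
    + (g `^ (a - 1))%:E * (epow (1 - E) (1 - a) - 1%E)) <= renyi mu b a p q.
Proof.
move=> b0 a0 a1; rewrite /renyi (negbTE a1).
case: (Egamma_cases a1) => [[E_eq1 a_gt1]|E_or_a].
  rewrite hellinger_eq_pinfty // gt0_muley ?lte_fin ?subr_gt0 // addey //=.
  by rewrite gt0_muley ?lte_fin ?invr_gt0 ?subr_gt0 // leey.
rewrite (epowE (ltW m_gt0) (or_introl m_gt0)) epowE //; last first.
  by case: E_or_a => ?; [left | right]; rewrite subr_gt0.
rewrite -EFinB -EFinM -EFinD.
exact: renyi_ge_of_hellinger b0 a1 (hellinger_ge_real a0 a1 E_or_a).
Qed.

Lemma KL_ge_Egamma c : (0 < ln c)%R -> - elogb c ((1 + E / g) * (1 - E))%:E <= KL mu c p q.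
Proof.
move=> c0; case: E_lt1_or_eq1 => [E_lt1|E_eq1]; last by rewrite KL_eq_pinfty // leey.
have n0 : (0 < 1 - E)%R by rewrite subr_gt0.
rewrite elogb_EFin ?mulr_gt0 // -EFinN; apply: le_trans (KL_ge_real c0 E_lt1).
by rewrite lee_fin /logb lnM ?posrE // mulNr.
Qed.

End Egamma_lower_bounds.

Theorem corollary2 (R : realType) (d : measure_display) (T : measurableType d)
    (mu : {measure set T -> \bar R}) (b : R) (p q : T -> R) (alpha gamma : R) :
  1 < b ->
  measurable_fun setT p -> measurable_fun setT q ->
  (forall x, 0 <= p x) -> (forall x, 0 <= q x) ->
  (\int[mu]_x (p x)%:E)%E = 1%E -> (\int[mu]_x (q x)%:E)%E = 1%E ->
  0 < alpha -> 1 <= gamma ->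
  let E := Egamma mu gamma p q in
  (alpha != 1 ->
     (((alpha - 1)^-1)%:E *
        (epow (1 + E / gamma) (1 - alpha) + epow ((1 - E) / gamma) (1 - alpha)
         - 1%E - (gamma `^ (alpha - 1))%:E) <= hellinger mu alpha p q)%E)
  /\ ((- elogb (expR 1) ((1 + E / gamma) * (1 - E))%:E <= KL mu (expR 1) p q)%E)
  /\ (alpha != 1 ->
     (((alpha - 1)^-1)%:E *
        elogb b (epow (1 + E / gamma) (1 - alpha)
                 + (gamma `^ (alpha - 1))%:E * (epow (1 - E) (1 - alpha) - 1%E))
      <= renyi mu b alpha p q)%E)
  /\ (alpha = 1 ->
     renyi mu b alpha p q = KL mu b p q /\
     (- elogb b ((1 + E / gamma) * (1 - E))%:E <= KL mu b p q)%E).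
Proof.
move=> b1 mp mq p0 q0 ip iq a0 g1 E.
have lnb_gt0 : 0 < ln b by exact: ln_gt0.
split; first by move=> a1; apply: hellinger_ge_Egamma.
split; first by apply: KL_ge_Egamma; rewrite // expRK.
split; first by move=> a1; apply: renyi_ge_Egamma.
by move=> a_eq1; split; [rewrite /renyi a_eq1 eqxx | apply: KL_ge_Egamma].
Qed.
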